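(* Take $\Omega=(0,\infty)$. The gamma function is a germinating function: for every $\delta>0$ there exists a Lebesgue measurable set $S\subseteq(0,\infty)$ with Lebesgue measure $\lambda(S)<\delta$ that is a fundamental set for $\Gamma$, i.e. $\mathrm{Cl}_\Omega(S)=(0,\infty)$.
   Context: Let $\Omega$ be either $(0,\infty)$ or $D=\mathbb{C}\setminus\{0,-1,-2,\dots\}$. An admissible instance (relative to $\Omega$) is one of the following finite lists of points, all entries of which are required to lie in $\Omega$: (i) $(z+1,\,z)$ for $z\in\Omega$ with $z+1\in\Omega$ (corresponding to the identity $\Gamma(z+1)=z\Gamma(z)$); (ii) $(z,\,1-z)$ for $z\in\Omega\setminus\mathbb{Z}$ with $1-z\in\Omega$ (corresponding to $\Gamma(z)\Gamma(1-z)=\pi/\sin(\pi z)$); (iii) for an integer $n\ge 2$, $\big(z,\,\tfrac{z}{n},\,\tfrac{z+1}{n},\dots,\tfrac{z+n-1}{n}\big)$ (corresponding to Gauss's multiplication formula $(2\pi)^{(n-1)/2}n^{1/2-z}\Gamma(z)=\prod_{j=0}^{n-1}\Gamma(\tfrac{z+j}{n})$). For $B\subseteq\Omega$, a point $p\in\Omega$ is obtained from $B$ in one step if there is an admissible instance in which $p$ occurs exactly once as an entry and every other entry lies in $B$. Set $B_0=B$, $B_{i+1}=B_i\cup\{p: p \text{ obtained from } B_i \text{ in one step}\}$, and $\mathrm{Cl}_\Omega(B)=\bigcup_{i\ge0}B_i$ (the set of points at which the value of $\Gamma$ is determined by its values on $B$ via finitely many applications of the identities). For $A,B\subseteq\Omega$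 write $A\preceq B$ if $A\subseteq \mathrm{Cl}_\Omega(B)$. A set $S\subseteq\Omega$ is a fundamental set (for $\Gamma$ on $\Omega$) if $\mathrm{Cl}_\Omega(S)=\Omega$. *)

From HB Require Import structures.
From mathcomp Require Import all_boot all_order all_algebra.
From mathcomp Require Import all_classical all_reals all_analysis.
Set Implicit Arguments. Unset Strict Implicit. Unset Printing Implicit Defensive.
Import Order.TTheory GRing.Theory Num.Theory.
Local Open Scope classical_set_scope.
Local Open Scope ring_scope.

Section GammaClosure.
Variable R : realType.

Definition Omega : set R := [set x | 0 < x].

Definition is_int (z : R) : Prop := exists k : int, z = k%:~R.

(* Gauss multiplication instance (z, z/n, (z+1)/n, ..., (z+n-1)/n) *)
Definition gauss_list (n : nat) (z : R) : seq R :=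
  z :: [seq (z + j%:R) / n%:R | j <- iota 0 n].

Definition admissible (Om : set R) (l : seq R) : Prop :=
  (forall q, q \in l -> Om q) /\
  ((exists z : R, l = [:: z + 1; z]) \/
   (exists z : R, ~ is_int z /\ l = [:: z; 1 - z]) \/
   (exists (n : nat) (z : R), (2 <= n)%N /\ l = gauss_list n z)).

Definition one_step (Om : set R) (B : set R) (p : R) : Prop :=
  exists l : seq R, admissible Om l /\ count_mem p l = 1%N /\
    (forall q, q \in l -> q != p -> B q).

Fixpoint Bstage (Om : set R) (B : set R) (i : nat) : set R :=
  match i with
  | 0 => B
  | i'.+1 => Bstage Om B i' `|` one_step Om (Bstage Om B i')
  end.

Definition Cl (Om : set R) (B : set R) : set R :=
  \bigcup_(i in [set: nat]) Bstage Om B i.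

Definition fundamental_set (Om : set R) (S : set R) : Prop :=
  S `<=` Om /\ Cl Om S = Om.

End GammaClosure.

From HB Require Import structures.
From mathcomp Require Import all_boot all_order all_algebra.
From mathcomp Require Import all_classical all_reals all_analysis.
From mathcomp Require Import ring lra zify.
Import Order.TTheory GRing.Theory Num.Theory.
Local Open Scope classical_set_scope.
Local Open Scope ring_scope.

(* Fix M > 4 / delta, N = 2 M! and e = 1 / M, and let S be the set of
   positive y such that N y lies within e of one of the integers 0, ..., N
   (the "strip set").  S is a union of N + 1 intervals of length 2e/N, hence
   has measure at most 4e < delta.  It is fundamental:
   - by Gamma(z + 1) = z Gamma(z) it suffices to reach every x in (0, 1];
   - x = 1 lies in S; for x in (0, 1) outside S, Dirichlet's approximation
     theorem gives d <= M with d x within 1/M of an integer k.  Since d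
     divides M!, n = N / d >= 2, and each Gauss point (x + j) / n, j < n,
     satisfies N (x + j) / n = d x + d j, within e of the integer k + d j;
     so all these points lie in S and Gauss's multiplication formula for n
     produces x in one step.
   The file proves Dirichlet's theorem, then the closure facts on (0, oo),
   then the properties of the strip set, and finally the theorem. *)

Section Dirichlet.
Context {R : realType}.

Definition fract (t : R) : R := t - (Num.floor t)%:~R.

Lemma fract_itv (t : R) : 0 <= fract t < 1.
Proof.
have /andP[h1 h2] := floor_itv t.
rewrite intrD in h2; apply/andP; split; rewrite /fract; lra.
Qed.

(* If [M * fract (a x)] and [M * fract (b x)] have the same floor, the two
   fractional parts are [1/M]-close, so [(b - a) x] is [1/M]-close to an integer. *)
Lemma fract_box_close (x : R) (M a b : nat) : (0 < M)%N -> (a <= b)%N ->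
  Num.floor (M%:R * fract (a%:R * x)) = Num.floor (M%:R * fract (b%:R * x)) ->
  exists k : int, `|(b - a)%N%:R * x - k%:~R| < M%:R^-1.
Proof.
move=> M0 ab box.
exists (Num.floor (b%:R * x) - Num.floor (a%:R * x)).
have -> : (b - a)%N%:R * x - (Num.floor (b%:R * x) - Num.floor (a%:R * x))%:~R
    = fract (b%:R * x) - fract (a%:R * x).
  by rewrite natrB // intrD intrN /fract; ring.
have Mpos : (0 : R) < M%:R by rewrite ltr0n.
have := floor_itv (M%:R * fract (a%:R * x)).
have := floor_itv (M%:R * fract (b%:R * x)).
rewrite box !intrD; set G := (Num.floor _)%:~R.
move=> /andP[hb1 hb2] /andP[ha1 ha2].
rewrite -(ltr_pM2l Mpos) mulfV ?gt_eqF // -[X in X * _]ger0_norm ?ltW //.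
rewrite -normrM ltr_norml; apply/andP; split; lra.
Qed.

(* Pigeonhole: the [M + 1] numbers
   [fract (i x)], [i <= M], fall into [M] boxes of width [1/M]. *)
Lemma dirichlet_approx (x : R) {M : nat} : (0 < M)%N ->
  exists d : nat, (0 < d <= M)%N /\
    exists k : int, `|d%:R * x - k%:~R| < M%:R^-1.
Proof.
move=> M0.
pose box (i : nat) := Num.floor (M%:R * fract (i%:R * x)).
have box_ge0 i : 0 <= box i.
  have /andP[h _] := fract_itv (i%:R * x).
  by rewrite floor_ge0 mulr_ge0.
have box_lt i : (`|box i| < M)%N.
  rewrite -ltz_nat gez0_abs // floor_lt_int.
  have /andP[_ h] := fract_itv (i%:R * x).
  by rewrite -[X in _ < X]mulr1 ltr_pM2l // ltr0n.
pose f (i : 'I_M.+1) : 'I_M := Ordinal (box_lt i).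
have /injectivePn [i [j ij fij]] : ~~ injectiveb f.
  by apply/negP => /injectiveP /leq_card; rewrite !card_ord ltnn.
have box_ij : box i = box j.
  move/(congr1 val): fij => /= /eqP.
  by rewrite -eqz_nat !gez0_abs // => /eqP.
have close a b : (a < b)%N -> (b <= M)%N -> box a = box b ->
    exists d : nat, (0 < d <= M)%N /\
      exists k : int, `|d%:R * x - k%:~R| < M%:R^-1.
  move=> ab bM eq_ab; exists (b - a)%N; split.
    by rewrite subn_gt0 ab (leq_trans (leq_subr _ _)).
  exact: fract_box_close (ltnW ab) eq_ab.
have iM : (i <= M)%N by rewrite -ltnS.
have jM : (j <= M)%N by rewrite -ltnS.
case: (ltngtP i j) => [lt_ij | lt_ji | eq_ij].
- exact: close lt_ij jM box_ij.
- exact: close lt_ji iM (esym box_ij).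
- by move: ij; rewrite (val_inj eq_ij) eqxx.
Qed.

End Dirichlet.

Section ClosureOnPositiveReals.
Context {R : realType}.
Local Notation Om := (@Omega R).

(* Every stage of the closure of a subset of (0, oo) stays in (0, oo):
   a point obtained in one step is an entry of an admissible instance. *)
Lemma Bstage_sub_Omega (S : set R) (i : nat) : S `<=` Om -> Bstage Om S i `<=` Om.
Proof.
move=> SO; elim: i => [|i IH] //= x [/IH //|[l [[lO _] [cnt _]]]].
by apply: lO; apply/negPn/negP => /count_memPn; rewrite cnt.
Qed.

(* The functional equation Gamma(z + 1) = z Gamma(z), used with z = x - 1:
   a point x > 1 is obtained in one step from any set containing x - 1. *)
Lemma shift_one_step (B : set R) (x : R) : 1 < x -> B (x - 1) -> one_step Om B x.
Proof.
move=> x1 Bx; exists [:: (x - 1) + 1; x - 1]; rewrite subrK.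
have neq_x : (x - 1 == x) = false by apply/negbTE; rewrite lt_eqF //; lra.
split; [split|split].
- by move=> q; rewrite !inE => /orP[] /eqP->; rewrite /Omega /=; lra.
- by left; exists (x - 1); rewrite subrK.
- by rewrite /= eqxx neq_x.
- by move=> q; rewrite !inE => /orP[] /eqP-> //; rewrite eqxx.
Qed.

Lemma Bstage_unit_shift (S : set R) :
  (forall x : R, 0 < x <= 1 -> Bstage Om S 1 x) ->
  forall (m : nat) (x : R), m%:R < x <= m%:R + 1 -> Bstage Om S m.+1 x.
Proof.
move=> base; elim=> [|m IH] x /andP[xlo xhi].
  by apply: base; rewrite add0r in xhi; rewrite xlo xhi.
right; apply: shift_one_step; rewrite -natr1 in xlo xhi.
  by have := ler0n R m; lra.
by apply: IH; apply/andP; split; lra.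
Qed.

Lemma fundamental_of_unit_interval (S : set R) : S `<=` Om ->
  (forall x : R, 0 < x <= 1 -> S x \/ one_step Om S x) ->
  fundamental_set Om S.
Proof.
move=> SO base; split => //; apply/seteqP; split.
  by move=> x [i _ /Bstage_sub_Omega]; apply.
move=> x /= x0; have /andP[clo chi] := ceil_itv x.
have c0 : 0 < Num.ceil x by rewrite ceil_gt0.
pose m := `|Num.ceil x - 1|%N.
have mE : (m%:R : R) = (Num.ceil x - 1)%:~R.
  by rewrite /m -[LHS]/((Posz _)%:~R) gez0_abs // subr_ge0.
exists m.+1 => //; apply: Bstage_unit_shift => [y /base //|].
by rewrite mE; rewrite intrD in clo chi; apply/andP; split; lra.
Qed.

Lemma gauss_one_step {B : set R} {n : nat} {x : R} :
  (2 <= n)%N -> 0 < x -> ~ B x ->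
  (forall j : nat, (j < n)%N -> B ((x + j%:R) / n%:R)) ->
  one_step Om B x.
Proof.
move=> n2 x0 nBx entB.
have n0 : (0 : R) < n%:R by rewrite ltr0n; apply: leq_trans n2.
have in_tail q : q \in [seq (x + j%:R) / n%:R | j <- iota 0 n] ->
    exists2 j : nat, (j < n)%N & q = (x + j%:R) / n%:R.
  by case/mapP => j; rewrite mem_iota add0n => /andP[_ jn] ->; exists j.
exists (gauss_list n x); split; [split|split].
- move=> q; rewrite inE => /orP[/eqP-> // | /in_tail [j _ ->]].
  by rewrite /Omega /= divr_gt0 //; have := ler0n R j; lra.
- by right; right; exists n, x.
- rewrite /gauss_list /= eqxx add1n; congr S.
  apply/count_memPn/negP => /in_tail [j jn xE]; apply: nBx.
  by rewrite {1}xE; apply: entB.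
- move=> q; rewrite inE => /orP[/eqP-> | /in_tail [j jn ->] _].
    by rewrite eqxx.
  exact: entB.
Qed.

End ClosureOnPositiveReals.

Section StripSet.
Context {R : realType}.

Definition strip (N : nat) (e c : R) : set R := [set y | `|N%:R * y - c| < e].

Definition strip_set (N : nat) (e : R) : set R :=
  [set y | 0 < y] `&` \bigcup_(k in `I_N.+1) strip N e k%:R.

Lemma strip_itv (N : nat) (e c : R) : (0 < N)%N ->
  strip N e c = `](c - e) / N%:R, (c + e) / N%:R[%classic.
Proof.
move=> N0; have Npos : (0 : R) < N%:R by rewrite ltr0n.
rewrite /strip; apply/seteqP; split => y /=;
  by rewrite in_itv /= ltr_distl ltr_pdivrMr // ltr_pdivlMr // [y * _]mulrC.
Qed.

Lemma strip_measure (N : nat) (e c : R) : (0 < N)%N -> 0 < e ->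
  lebesgue_measure (strip N e c) = (2 * e / N%:R)%:E.
Proof.
move=> N0 e0; have Npos : (0 : R) < N%:R by rewrite ltr0n.
rewrite strip_itv // lebesgue_measure_itv /= lte_fin ltr_pM2r ?invr_gt0 //.
have -> : c - e < c + e by lra.
by rewrite -EFinD; congr (_%:E); field; rewrite gt_eqF.
Qed.

Lemma strip_set_measurable (N : nat) (e : R) : (0 < N)%N ->
  measurable (strip_set N e).
Proof.
move=> N0; apply: measurableI.
  rewrite (_ : [set y : R | 0 < y] = `]0, +oo[%classic); first exact: measurable_itv.
  by apply/seteqP; split => y /=; rewrite in_itv /= andbT.
apply: fin_bigcup_measurable => [|k _]; first exact: finite_II.
by rewrite strip_itv //; apply: measurable_itv.
Qed.

(* Subadditivity over the N + 1 strips: the measure is at most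
   (N + 1) * 2e/N <= 4e. *)
Lemma strip_set_measure_le (N : nat) (e : R) : (0 < N)%N -> 0 < e ->
  (lebesgue_measure (strip_set N e) <= (4 * e)%:E)%E.
Proof.
move=> N0 e0; have Npos : (0 : R) < N%:R by rewrite ltr0n.
have strip_m k : measurable (strip N e k%:R).
  by rewrite strip_itv //; exact: measurable_itv.
apply: (@le_trans _ _ (\sum_(k < N.+1) lebesgue_measure (strip N e k%:R))%E).
  apply: (@content_subadditive _ _ _ lebesgue_measure _
    (fun k : nat => strip N e k%:R)) => [k _ | | ].
  - exact: strip_m.
  - exact: (strip_set_measurable N e N0).
  - by move=> y [_]; rewrite bigcup_mkord.
under eq_bigr => k _ do rewrite strip_measure //.
rewrite sumEFin lee_fin sumr_const card_ord.
have -> : 2 * e / N%:R *+ N.+1 = 2 * e + 2 * (e / N%:R).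
  by rewrite -(mulr_natr (2 * e / N%:R)) -(natr1 N); field; rewrite gt_eqF.
have : e / N%:R <= e by rewrite ler_pdivrMr // ler_peMr ?(ltW e0) // ler1n.
lra.
Qed.

(* A point of (0, 1] whose N-multiple is within e <= 1 of an integer K lies
   in the strip set: necessarily 0 <= K <= N. *)
Lemma strip_set_mem (N : nat) (e y : R) (K : int) : e <= 1 -> 0 < y <= 1 ->
  `|N%:R * y - K%:~R| < e -> strip_set N e y.
Proof.
move=> e1 /andP[y0 y1] hK.
have Ny0 : 0 <= N%:R * y by rewrite mulr_ge0 // ltW.
have Ny1 : N%:R * y <= N%:R by rewrite ler_piMr.
move: (hK); rewrite ltr_distl => /andP[Klo Khi].
have : ((-1 : int)%:~R : R) < K%:~R by rewrite intrN mulr1z; lra.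
have : (K%:~R : R) < ((N.+1)%:Z)%:~R by rewrite -pmulrn -natr1; lra.
rewrite !ltr_int => KN Kpos.
have K0 : (0 <= K)%R by lia.
split => //; exists `|K|%N; first by rewrite /= -ltz_nat gez0_abs.
by rewrite /strip /= (_ : (`|K|%N)%:R = K%:~R) // pmulrn gez0_abs.
Qed.


(* Under the rescaling y = (x + j) / n with N = n d, the N-multiple of y is
   d x + d j; so if d x is within e of an integer, every Gauss point
   (x + j) / n of x in (0, 1) falls into the strip set. *)
Lemma strip_set_gauss_points {N d : nat} {e x : R} {k : int} :
  (0 < d)%N -> (d %| N)%N -> (0 < N %/ d)%N -> e <= 1 -> 0 < x < 1 ->
  `|d%:R * x - k%:~R| < e ->
  forall j : nat, (j < N %/ d)%N -> strip_set N e ((x + j%:R) / (N %/ d)%:R).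
Proof.
move=> d0 dN n0 e1 /andP[x0 x1] hk j jn.
set n := (N %/ d)%N in n0 jn *.
have Nn : (N%:R : R) = n%:R * d%:R by rewrite -natrM /n divnK.
have npos : (0 : R) < n%:R by rewrite ltr0n.
apply: (@strip_set_mem N e _ (k + (d * j)%N%:Z) e1).
  have jn' : (j%:R : R) + 1 <= n%:R by rewrite natr1 ler_nat.
  have := ler0n R j => j0.
  by rewrite divr_gt0 ?ler_pdivrMr /= ?mul1r //; lra.
rewrite (_ : _ - _ = d%:R * x - k%:~R) // Nn intrD.
rewrite (_ : ((d * j)%N%:Z)%:~R = (d * j)%N%:R :> R) // natrM.
by field; rewrite gt_eqF.
Qed.

(* A point x of (0, 1) outside it has, by Dirichlet, some d <= M
   with d x within 1/M of an integer; then d divides M!, n = N / d >= 2, and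
   the Gauss multiplication formula for n yields x in one step. *)
Lemma strip_set_fundamental (M : nat) : (0 < M)%N ->
  fundamental_set (@Omega R) (strip_set (2 * M`!) M%:R^-1).
Proof.
move=> M0; set N := (2 * M`!)%N; set e : R := M%:R^-1.
have Mpos : (0 : R) < M%:R by rewrite ltr0n.
have e1 : e <= 1 by rewrite invr_le1 // ?ler1n // unitfE gt_eqF.
have SO : strip_set N e `<=` @Omega R by move=> y [].
apply: fundamental_of_unit_interval => // x /andP[x0 x1].
have [Sx | nSx] := pselect (strip_set N e x); [by left | right].
have x_lt1 : x < 1.
  rewrite lt_neqAle x1 andbT; apply/negP => /eqP xE; apply: nSx.
  apply: (@strip_set_mem N e _ N%:Z e1); rewrite xE ?ltr01 ?lexx //.
  by rewrite mulr1 subrr normr0 invr_gt0.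
have [d [/andP[d0 dM] [k hk]]] := dirichlet_approx x M0.
have d_fact : (d %| M`!)%N by rewrite dvdn_fact // d0.
have n_ge2 : (2 <= N %/ d)%N.
  rewrite /N -muln_divA // -[2%N]muln1 leq_mul2l /= divn_gt0 //.
  exact: dvdn_leq (fact_gt0 M) d_fact.
apply: (gauss_one_step n_ge2 x0 nSx).
apply: (strip_set_gauss_points d0 _ _ e1 _ hk).
- by rewrite /N dvdn_mull.
- exact: leq_trans n_ge2.
- by rewrite x0 x_lt1.
Qed.

End StripSet.

Theorem mainTheorem8 (R : realType) (delta : R) (hdelta : 0 < delta) :
  exists S : set R,
    measurable S /\ S `<=` @Omega R /\
    (lebesgue_measure S < delta%:E)%E /\
    fundamental_set (@Omega R) S.
Proof.
pose M := (Num.bound (4 / delta)).+1.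
have M0 : (0 < M)%N by [].
have Mpos : (0 : R) < M%:R by rewrite ltr0n.
have small : 4 * M%:R^-1 < delta.
  rewrite ltr_pdivrMr // -ltr_pdivrMl // mulrC.
  apply: lt_trans (archi_boundP _) _; first by rewrite mulr_ge0 ?invr_ge0 // ltW.
  by rewrite ltr_nat.
have N0 : (0 < 2 * M`!)%N by rewrite muln_gt0 fact_gt0.
exists (strip_set (2 * M`!) M%:R^-1); split; last split; last split.
- exact: strip_set_measurable.
- by move=> y [].
- have e0 : (0 : R) < M%:R^-1 by rewrite invr_gt0.
  by apply: (le_lt_trans (strip_set_measure_le _ _ N0 e0)); rewrite lte_fin.
- exact: strip_set_fundamental.
Qed.
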